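(* Let $n$ be a power of $2$ and let $A\subseteq\{0,1\}^{\log n}$ be arbitrary. For every $\epsilon>0$, the property $P_A=\{x\in\{0,1\}^n:\exists y\in A,\ x=h(y)\}$ has a quantum property tester with distance parameter $\epsilon$ that makes $O(1/\epsilon)$ queries (the constant independent of $n$ and $A$) and has one-sided error.
   Context: Logarithms are base 2. Positions $i\in\{1,\dots,n\}$ of a string of length $n$ are identified with vectors in $\mathbb{F}_2^{\log n}$. The Hadamard code of $y\in\{0,1\}^{\log n}$ is $h(y)\in\{0,1\}^n$ with $h(y)_i=y\cdot i$ (inner product over $\mathbb{F}_2$). For $P\subseteq\{0,1\}^n$, $x$ is $\epsilon$-far from $P$ if it differs from every $y\in P$ in more than $\epsilon n$ positions. A quantum property tester for $P$ with distance parameter $\epsilon$ is a quantum algorithm with oracle $O_x:\lvert i,b,z\rangle\mapsto\lvert i,b\oplus x_i,z\rangle$ that accepts every $x\in P$ with probability at least $2/3$ and every $x$ that is $\epsilon$-far from $P$ with probability at most $1/3$; one-sided error means every $x\in P$ is accepted with probability $1$. Complexity is the number of oracle queries. *)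

From HB Require Import structures.
From mathcomp Require Import all_boot all_order all_algebra.
From mathcomp Require Import reals complex.
Set Implicit Arguments. Unset Strict Implicit. Unset Printing Implicit Defensive.
Import Order.TTheory GRing.Theory Num.Theory.
Local Open Scope ring_scope.

(* Position i : 'I_(2^k) is identified with the vector of its k binary digits
   in F_2^k (bit j of i is odd (i %/ 2^j)). *)
Definition bitvec (k : nat) (i : 'I_(2 ^ k)) : {ffun 'I_k -> bool} :=
  [ffun j : 'I_k => odd (i %/ 2 ^ j)].

Definition dotF2 (k : nat) (y z : {ffun 'I_k -> bool}) : bool :=
  \big[addb/false]_(j < k) (y j && z j).

Definition hadamard (k : nat) (y : {ffun 'I_k -> bool}) : {ffun 'I_(2 ^ k) -> bool} :=
  [ffun i => dotF2 y (bitvec i)].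

Definition PA (k : nat) (A : {set {ffun 'I_k -> bool}}) : {set {ffun 'I_(2 ^ k) -> bool}} :=
  [set x | [exists y in A, x == hadamard y]].

Definition hamming (n : nat) (x y : {ffun 'I_n -> bool}) : nat :=
  #|[set i | x i != y i]|.

Definition far (R : realType) (n : nat) (eps : R)
    (P : {set {ffun 'I_n -> bool}}) (x : {ffun 'I_n -> bool}) : Prop :=
  forall y, y \in P -> eps * n%:R < (hamming x y)%:R.

(* Basis states |i, b, z> with i : 'I_n, b : bool, z : 'I_m (workspace). *)
Definition basis (n m : nat) : finType := ('I_n * bool * 'I_m)%type.

Definition qstate (R : realType) (n m : nat) := basis n m -> R[i].
Definition qop (R : realType) (n m : nat) := basis n m -> basis n m -> R[i].

Definition apply_op (R : realType) (n m : nat) (U : qop R n m) (v : qstate R n m)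
  : qstate R n m := fun s => \sum_(t : basis n m) U s t * v t.

(* U is unitary: U^dagger U = I (equivalent to unitarity in finite dimension). *)
Definition unitary (R : realType) (n m : nat) (U : qop R n m) : Prop :=
  forall s s' : basis n m,
    \sum_(t : basis n m) (U t s)^* * U t s' = (s == s')%:R.

Definition oracle (R : realType) (n m : nat) (x : {ffun 'I_n -> bool}) : qop R n m :=
  fun s t => ((t.1.1, t.1.2 (+) x t.1.1, t.2) == s)%:R.

(* A quantum query algorithm making T queries: workspace size m, an initial
   basis state, unitaries U_0, ..., U_T (interleaved with T oracle calls),
   and a final computational-basis measurement whose outcomes in acc mean
   "accept" (general measurements reduce to this by absorbing them into U_T
   and enlarging the workspace). *)
Record qalgo (R : realType) (n : nat) := QAlgo {
  qa_m : nat;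
  qa_T : nat;
  qa_init : basis n qa_m;
  qa_U : nat -> qop R n qa_m;
  qa_acc : {set basis n qa_m}
}.
Arguments qa_m {R n}.
Arguments qa_T {R n}.
Arguments qa_init {R n}.
Arguments qa_U {R n}.
Arguments qa_acc {R n}.
Arguments QAlgo {R n}.

Definition qalgo_wf (R : realType) (n : nat) (Q : qalgo R n) : Prop :=
  forall j, (j <= qa_T Q)%N -> unitary (qa_U Q j).

Definition delta (R : realType) (n m : nat) (s0 : basis n m) : qstate R n m :=
  fun s => (s == s0)%:R.

Fixpoint run (R : realType) (n : nat) (Q : qalgo R n) (x : {ffun 'I_n -> bool})
    (t : nat) : qstate R n (qa_m Q) :=
  match t with
  | 0 => apply_op (qa_U Q 0) (@delta R n (qa_m Q) (qa_init Q))
  | t'.+1 => apply_op (qa_U Q t) (apply_op (@oracle R n (qa_m Q) x) (@run R n Q x t'))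
  end.
Arguments run {R n} Q x t.

Definition sqnorm (R : realType) (z : R[i]) : R := (complex.Re z) ^+ 2 + (complex.Im z) ^+ 2.

Definition acc_prob (R : realType) (n : nat) (Q : qalgo R n) (x : {ffun 'I_n -> bool}) : R :=
  \sum_(s in qa_acc Q) sqnorm (run Q x (qa_T Q) s).

Definition one_sided_tester (R : realType) (n : nat) (P : {set {ffun 'I_n -> bool}})
    (eps : R) (Q : qalgo R n) : Prop :=
  qalgo_wf Q /\
  (forall x, x \in P -> acc_prob Q x = 1) /\
  (forall x, far eps P x -> acc_prob Q x <= 1 / 3).

From HB Require Import structures.
From mathcomp Require Import all_boot all_order all_algebra.
From mathcomp Require Import reals complex.
From mathcomp Require Import ring lra.
From mathcomp Require boolp.
Import Order.TTheory GRing.Theory Num.Theory.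
Set Implicit Arguments. Unset Strict Implicit. Unset Printing Implicit Defensive.

(* Fourier sampling.  Querying twice around a phase gate turns the oracle into
   the phase state with amplitudes (-1)^(x_i); its Hadamard transform has
   amplitude x^(y) = 2^-k sum_i (-1)^(x_i + h(y)_i) on y, and these squares sum
   to 1 (Parseval).  The tester keeps the outcome y in its workspace, and then
   r times queries a uniformly random position (kept coherently in a fresh
   workspace slot), finally accepting iff y is in A and all r answers agree
   with h(y).  Its acceptance probability is
     sum_(y in A) x^(y)^2 (agree(x, h(y)) / n)^r.
   For x = h(y0) the coefficients are the indicator of y0, so x is accepted
   with certainty; if x is eps-far from P_A every ratio agree/n is at most
   1 - eps, and r ~ 2/eps rounds push (1 - eps)^r below 1/3.  For eps >= 1 no
   string is eps-far from a nonempty set, so a query-free test of A <> set0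
   suffices. *)

Lemma eq_from_bits k a b : (a < 2 ^ k)%N -> (b < 2 ^ k)%N ->
  (forall j, (j < k)%N -> odd (a %/ 2 ^ j) = odd (b %/ 2 ^ j)) -> a = b.
Proof.
elim: k a b => [|k IH] a b ha hb eq_bits.
  by move: ha hb; rewrite expn0 !ltnS !leqn0 => /eqP -> /eqP ->.
have odd_ab := eq_bits 0%N (ltn0Sn k); rewrite expn0 !divn1 in odd_ab.
have half_ab : a %/ 2 = b %/ 2.
  apply: IH; rewrite ?ltn_divLR // -?expnSr //.
  by move=> j lt_jk; rewrite -!divnMA -expnS; exact: eq_bits.
by rewrite (divn_eq a 2) (divn_eq b 2) !modn2 half_ab odd_ab.
Qed.

Lemma bitvec_inj k : injective (@bitvec k).
Proof.
move=> a b /ffunP eq_ab; apply/val_inj/(eq_from_bits (ltn_ord a) (ltn_ord b)).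
by move=> j lt_jk; have := eq_ab (Ordinal lt_jk); rewrite !ffunE.
Qed.

Lemma bitvec_bij k : bijective (@bitvec k).
Proof.
apply: inj_card_bij; first exact: bitvec_inj.
by rewrite card_ffun card_bool !card_ord.
Qed.

Local Open Scope ring_scope.

Definition pos0 k : 'I_(2 ^ k) := Ordinal (expn_gt0 2 k).

Lemma bitvec_pos0 k : bitvec (pos0 k) = [ffun => false].
Proof. by apply/ffunP => j; rewrite !ffunE /= div0n. Qed.

Lemma dotF2C k (v z : {ffun 'I_k -> bool}) : dotF2 v z = dotF2 z v.
Proof. by apply: eq_bigr => j _; rewrite andbC. Qed.

Lemma dotF2_addbr k (v z z' : {ffun 'I_k -> bool}) :
  dotF2 v z (+) dotF2 v z' = dotF2 v [ffun j => z j (+) z' j].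
Proof.
rewrite /dotF2 -big_split /=; apply: eq_bigr => j _.
by rewrite ffunE; case: (v j); case: (z j); case: (z' j).
Qed.

Lemma dotF2_0r k (v : {ffun 'I_k -> bool}) : dotF2 v [ffun => false] = false.
Proof. by apply: big1 => j _; rewrite ffunE andbF. Qed.

Lemma sign_dotF2 (R : nzRingType) k (v z : {ffun 'I_k -> bool}) :
  (-1) ^+ dotF2 v z = \prod_(j < k) ((-1) ^+ (v j && z j) : R).
Proof. exact: (big_morph _ (signr_addb R)). Qed.

Lemma sum_sign_dotF2 (R : comNzRingType) k (z : {ffun 'I_k -> bool}) :
  \sum_(v : {ffun 'I_k -> bool}) ((-1) ^+ dotF2 v z : R) =
  (z == [ffun => false])%:R * (2 ^ k)%:R.
Proof.
under eq_bigr do rewrite sign_dotF2.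
rewrite -(bigA_distr_bigA (fun j (b : bool) => (-1) ^+ (b && z j))) /=.
under eq_bigr => j _ do rewrite big_bool /=.
have [->|nz] := eqVneq z [ffun => false].
  by under eq_bigr do rewrite ffunE; rewrite mul1r prodr_const card_ord natrX.
rewrite mul0r; have /existsP[j zj] : [exists j, z j].
  apply: contraNT nz => /existsPn z0; apply/eqP/ffunP => j.
  by rewrite ffunE; exact/negbTE/z0.
by rewrite (bigD1 j) //= zj expr1 expr0 addNr mul0r.
Qed.

Lemma sum_bitvec (V : nmodType) k (G : {ffun 'I_k -> bool} -> V) :
  \sum_(y : 'I_(2 ^ k)) G (bitvec y) = \sum_v G v.
Proof. by rewrite [RHS](reindex (@bitvec k)) //; exact: onW_bij (bitvec_bij k). Qed.

Lemma ffun_addb_eq0 k (z z' : {ffun 'I_k -> bool}) :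
  ([ffun j => z j (+) z' j] == [ffun => false]) = (z == z').
Proof.
apply/eqP/eqP => [/ffunP z_z'|->]; last by apply/ffunP => j; rewrite !ffunE addbb.
by apply/ffunP => j; move: (z_z' j); rewrite !ffunE; case: (z j); case: (z' j).
Qed.

Definition walsh (R : nzRingType) k (a b : 'I_(2 ^ k)) : R :=
  (-1) ^+ dotF2 (bitvec a) (bitvec b).

Section Walsh.
Variables (R : comNzRingType) (k : nat).
Local Notation n := (2 ^ k)%N.

Lemma walshC (a b : 'I_n) : walsh R a b = walsh R b a.
Proof. by rewrite /walsh dotF2C. Qed.

Lemma walsh_pos0r (a : 'I_n) : walsh R a (pos0 k) = 1.
Proof. by rewrite /walsh bitvec_pos0 dotF2_0r. Qed.

Lemma walsh_hadamard (y i : 'I_n) : walsh R y i = (-1) ^+ hadamard (bitvec y) i.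
Proof. by rewrite ffunE. Qed.

Lemma sum_walsh_mul (i i' : 'I_n) :
  \sum_(y : 'I_n) walsh R y i * walsh R y i' = (i == i')%:R * n%:R.
Proof.
under eq_bigr do rewrite -signr_addb dotF2_addbr.
rewrite (sum_bitvec (fun v => (-1) ^+ dotF2 v [ffun j => bitvec i j (+) bitvec i' j])).
by rewrite sum_sign_dotF2 ffun_addb_eq0 (inj_eq (@bitvec_inj k)).
Qed.

End Walsh.

Section RealKernels.
Variables (R : comNzRingType) (S : finType).
Implicit Types (K L : S -> S -> R) (v : S -> R).

Definition kapply K v : S -> R := fun s => \sum_t K s t * v t.
Definition kmul K L : S -> S -> R := fun s t => \sum_u K s u * L u t.
Definition orthogonal K := forall s s', \sum_t K t s * K t s' = (s == s')%:R.
Definition kperm (f : S -> S) : S -> S -> R := fun s t => (f t == s)%:R.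

Lemma sum_mul_delta (F : S -> R) u : \sum_t F t * (u == t)%:R = F u.
Proof.
rewrite (bigD1 u) //= eqxx mulr1 big1 ?addr0 // => t /negbTE.
by rewrite eq_sym => ->; rewrite mulr0.
Qed.

Lemma sum_delta_mul (F : S -> R) u : \sum_t (t == u)%:R * F t = F u.
Proof.
by rewrite -[RHS](sum_mul_delta F); apply: eq_bigr => t _; rewrite mulrC eq_sym.
Qed.

Lemma kapply_mul K L v : kapply (kmul K L) v = kapply K (kapply L v).
Proof.
apply: boolp.funext => s; rewrite /kapply /kmul.
under eq_bigr do rewrite mulr_suml.
rewrite exchange_big; apply: eq_bigr => u _; rewrite mulr_sumr.
by apply: eq_bigr => t _; rewrite mulrA.
Qed.

Lemma orthogonal_mul K L : orthogonal K -> orthogonal L -> orthogonal (kmul K L).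
Proof.
move=> oK oL s s'; rewrite /kmul.
transitivity (\sum_u \sum_u' L u s * L u' s' * \sum_t K t u * K t u').
  under eq_bigr do rewrite big_distrlr.
  rewrite exchange_big; apply: eq_bigr => u _.
  rewrite exchange_big; apply: eq_bigr => u' _.
  by rewrite mulr_sumr; apply: eq_bigr => t _ /=; ring.
rewrite -oL; apply: eq_bigr => u _.
under eq_bigr do rewrite oK.
by rewrite (sum_mul_delta (fun u' => L u s * L u' s')) mulrC.
Qed.

Lemma kapply_perm f v : involutive f -> kapply (kperm f) v = v \o f.
Proof.
move=> fK; apply: boolp.funext => s; rewrite /kapply /kperm.
under eq_bigr => t _ do rewrite (inv_eq fK).
by rewrite sum_delta_mul.
Qed.

Lemma orthogonal_perm f : involutive f -> orthogonal (kperm f).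
Proof.
move=> fK s s'; rewrite /kperm.
under eq_bigr do rewrite (eq_sym (f s)).
by rewrite sum_delta_mul (inj_eq (inv_inj fK)) eq_sym.
Qed.

Lemma sum_mul_delta_and (F : S -> R) u (c : bool) :
  \sum_t F t * ((t == u) && c)%:R = F u * c%:R.
Proof.
under eq_bigr do rewrite -mulnb natrM mulrA.
rewrite -mulr_suml -(sum_mul_delta F); congr (_ * _).
by apply: eq_bigr => t _; rewrite eq_sym.
Qed.

Lemma sqr_natb (b : bool) : (b%:R : R) ^+ 2 = b%:R.
Proof. by case: b; rewrite ?expr1n ?expr0n. Qed.

Lemma prod_nat_bool (P : pred S) : \prod_s ((P s)%:R : R) = [forall s, P s]%:R.
Proof.
have [/forallP P_all|/forallPn[s nPs]] := boolP [forall s, P s].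
  by rewrite big1 // => s _; rewrite P_all.
by rewrite (bigD1 s) //= (negbTE nPs) mul0r.
Qed.

End RealKernels.

Lemma sum_ffun_prod (R : comNzRingType) (I J : finType) (G : J -> R) :
  \sum_(f : {ffun I -> J}) \prod_i G (f i) = (\sum_j G j) ^+ #|I|.
Proof. by rewrite -(bigA_distr_bigA (fun _ => G)) prodr_const. Qed.

Section Complexification.
Variables (R : realType) (n m : nat).
Local Notation S := (basis n m).
Local Open Scope complex_scope.

Definition cplx (K : S -> S -> R) : qop R n m := fun s t => (K s t)%:C.

Lemma unitary_cplx K : orthogonal K -> unitary (cplx K).
Proof.
move=> oK s s'; rewrite /cplx.
have conj_real (r : R) : Num.conj r%:C = r%:C by rewrite /Num.conj /= oppr0.
under eq_bigr do rewrite conj_real -rmorphM.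
by rewrite -rmorph_sum oK rmorph_nat.
Qed.

Lemma apply_cplx K v :
  apply_op (cplx K) (fun s => (v s)%:C) = fun s => (kapply K v s)%:C.
Proof.
apply: boolp.funext => s; rewrite /apply_op /kapply rmorph_sum.
by apply: eq_bigr => t _; rewrite rmorphM.
Qed.

Lemma deltaE s0 : @delta R n m s0 = fun s => ((s == s0)%:R : R)%:C.
Proof. by apply: boolp.funext => s; rewrite /delta rmorph_nat. Qed.

Definition flip (x : {ffun 'I_n -> bool}) (s : S) : S :=
  (s.1.1, s.1.2 (+) x s.1.1, s.2).

Lemma flipK x : involutive (flip x).
Proof. by case=> [[i b] w]; rewrite /flip /= addbK. Qed.

Lemma apply_oracle x v :
  apply_op (@oracle R n m x) (fun s => (v s)%:C) = fun s => (v (flip x s))%:C.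
Proof.
have -> : @oracle R n m x = cplx (kperm R (flip x)).
  by do 2!apply: boolp.funext => ?; rewrite /cplx /kperm rmorph_nat.
by rewrite apply_cplx kapply_perm //; exact: flipK.
Qed.

Lemma sqnorm_real (a : R) : sqnorm a%:C = a ^+ 2.
Proof. by rewrite /sqnorm /= expr0n addr0. Qed.

End Complexification.

Section Gates.
Variables (R : realType) (k m : nat).
Local Notation n := (2 ^ k)%N.
Local Notation S := (basis n m).

Definition hscale : R := (Num.sqrt n%:R)^-1.

Lemma hscale_ge0 : 0 <= hscale.
Proof. by rewrite invr_ge0 sqrtr_ge0. Qed.

Lemma hscale_sqr : hscale * hscale * n%:R = 1.
Proof. by rewrite -expr2 exprVn sqr_sqrtr ?ler0n // mulVf // pnatr_eq0 expn_eq0. Qed.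

Lemma sum_index_fiber (F : S -> R) b w :
  \sum_t ((t.1.2 == b) && (t.2 == w))%:R * F t = \sum_i F (i, b, w).
Proof.
transitivity (\sum_i \sum_t (t == (i, b, w))%:R * F t); last first.
  by apply: eq_bigr => i _; rewrite sum_delta_mul.
rewrite exchange_big; apply: eq_bigr => -[[i b'] w'] _ /=.
rewrite -mulr_suml (bigD1 i) //= big1 => [|j ji]; last first.
  by rewrite !xpair_eqE eq_sym (negbTE ji).
by rewrite !xpair_eqE eqxx addr0.
Qed.

Definition hgate : S -> S -> R := fun s t =>
  ((s.1.2 == t.1.2) && (s.2 == t.2))%:R * (hscale * walsh R s.1.1 t.1.1).

Lemma kapply_hgate v s :
  kapply hgate v s = hscale * \sum_i walsh R s.1.1 i * v (i, s.1.2, s.2).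
Proof.
rewrite /kapply mulr_sumr.
rewrite -(sum_index_fiber (fun t => hscale * (walsh R s.1.1 t.1.1 * v t))).
by apply: eq_bigr => t _; rewrite (eq_sym t.1.2) (eq_sym t.2) -!mulrA.
Qed.

Lemma orthogonal_hgate : orthogonal hgate.
Proof.
move=> s s'; transitivity (\sum_t ((t.1.2 == s.1.2) && (t.2 == s.2))%:R *
    (((t.1.2 == s'.1.2) && (t.2 == s'.2))%:R * (hscale * hscale) *
     (walsh R t.1.1 s.1.1 * walsh R t.1.1 s'.1.1))).
  by apply: eq_bigr => t _; rewrite /hgate; ring.
rewrite sum_index_fiber /= -mulr_sumr sum_walsh_mul.
case: s s' => [[i b] w] [[i' b'] w'] /=.
rewrite !xpair_eqE -!mulnb !natrM.
transitivity ((i == i')%:R * (b == b')%:R * (w == w')%:R * (hscale * hscale * n%:R) : R).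
  by ring.
by rewrite hscale_sqr mulr1.
Qed.

Definition zgate : S -> S -> R := fun s t => (s == t)%:R * (-1) ^+ s.1.2.

Lemma kapply_zgate v : kapply zgate v = fun s => (-1) ^+ s.1.2 * v s.
Proof.
apply: boolp.funext => s; rewrite /kapply /zgate.
under eq_bigr do rewrite -mulrA eq_sym.
exact: (sum_delta_mul (fun t => (-1) ^+ s.1.2 * v t)).
Qed.

Lemma orthogonal_zgate : orthogonal zgate.
Proof.
move=> s s'; rewrite /zgate.
under eq_bigr do rewrite mulrACA -expr2 sqrr_sign mulr1.
exact: (sum_delta_mul (fun t => (t == s')%:R)).
Qed.

End Gates.

Section Tester.
Variables (R : realType) (k r : nat).
Local Notation n := (2 ^ k)%N.

Definition samples := {ffun 'I_r -> 'I_n * bool}.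
Definition workspace := ('I_n * samples)%type.
Definition wsize := #|{: workspace}|.
Local Notation S := (basis n wsize).

Definition enc (w : workspace) : 'I_wsize := enum_rank w.
Definition dec (w : 'I_wsize) : workspace := enum_val w.

Lemma encK : cancel enc dec. Proof. exact: enum_rankK. Qed.
Lemma decK : cancel dec enc. Proof. exact: enum_valK. Qed.

Lemma sum_basis_workspace (G : S -> R) :
  \sum_s G s = \sum_(i : 'I_n) \sum_(b : bool) \sum_(w : workspace) G (i, b, enc w).
Proof.
transitivity (\sum_(p : 'I_n * bool) \sum_(w : 'I_wsize) G (p, w)).
  by rewrite [RHS]pair_bigA; apply: eq_big => [|[]].
transitivity (\sum_(p : 'I_n * bool) \sum_(w : workspace) G (p, enc w)); last first.
  by rewrite [RHS]pair_bigA; apply: eq_big => [|[[]]].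
apply: eq_bigr => p _.
rewrite (reindex enc) //; exact: onW_bij _ (Bijective encK decK).
Qed.

Definition blank : samples := [ffun => (pos0 k, false)].
Definition init : S := (pos0 k, false, enc (pos0 k, blank)).

Definition swap_index (s : S) : S := ((dec s.2).1, s.1.2, enc (s.1.1, (dec s.2).2)).

Lemma swap_indexK : involutive swap_index.
Proof. by case=> [[i b] w]; rewrite /swap_index /= encK /= -surjective_pairing decK. Qed.

Definition record (l : 'I_r) (s : S) : S :=
  let sl := (dec s.2).2 in
  ((sl l).1, (sl l).2,
   enc ((dec s.2).1, [ffun l' => if l' == l then (s.1.1, s.1.2) else sl l'])).

Lemma recordK l : involutive (record l).
Proof.
case=> [[i b] w]; rewrite /record /= encK /= ffunE eqxx /=.
congr (_, _, _); rewrite -[RHS]decK; congr enc.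
rewrite [RHS]surjective_pairing; congr (_, _).
by apply/ffunP => l'; rewrite !ffunE; case: eqP => [->|] //; rewrite -surjective_pairing.
Qed.

(* Gates 0 and 1 around the first two queries make the phase (-1)^(x i);
   gate 2 Fourier-transforms the index, swaps the outcome y into the workspace
   and spreads the index uniformly again; gate l+3 swaps the (index, answer)
   pair of the preceding query into slot l and spreads the index again. *)
Definition gate (j : nat) : S -> S -> R :=
  match j with
  | 0 => @hgate R k wsize
  | 1 => @zgate R k wsize
  | 2 => kmul (@hgate R k wsize) (kmul (kperm R swap_index) (@hgate R k wsize))
  | j'.+3 => if insub j' is Some l then kmul (@hgate R k wsize) (kperm R (record l))
             else kperm R id
  end.

Lemma orthogonal_gate j : orthogonal (gate j).
Proof.
case: j => [|[|[|j]]] /=; first exact: orthogonal_hgate; first exact: orthogonal_zgate.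
  apply: orthogonal_mul; first exact: orthogonal_hgate.
  by apply: orthogonal_mul; [exact: orthogonal_perm swap_indexK|exact: orthogonal_hgate].
case: insub => [l|]; last exact: orthogonal_perm.
by apply: orthogonal_mul; [exact: orthogonal_hgate | exact: orthogonal_perm (recordK l)].
Qed.

Definition accepting (A : {set {ffun 'I_k -> bool}}) : {set S} :=
  [set s | let: (y, sl) := dec s.2 in
           (bitvec y \in A) && [forall l, (sl l).2 == hadamard (bitvec y) (sl l).1]].

Definition tester A : qalgo R n :=
  QAlgo wsize r.+2 init (fun j => cplx (gate j)) (accepting A).

Lemma tester_wf A : qalgo_wf (tester A).
Proof. by move=> j _; apply: unitary_cplx; exact: orthogonal_gate. Qed.

End Tester.

Section Run.
Variables (R : realType) (k r : nat) (A : {set {ffun 'I_k -> bool}}).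
Variable x : {ffun 'I_(2 ^ k) -> bool}.
Local Notation n := (2 ^ k)%N.
Local Notation S := (basis n (wsize k r)).
Local Notation c := (hscale R k).
Local Notation Q := (tester R r A).
Local Notation w0 := (enc (pos0 k, blank k r)).
Local Open Scope complex_scope.

Definition fourier (y : 'I_n) : R := c * c * \sum_i walsh R y i * (-1) ^+ x i.

Definition correct (sl : samples k r) (l : 'I_r) : bool := (sl l).2 == x (sl l).1.

(* Amplitudes after j + 2 queries: the index register is uniform, the
   workspace holds y with amplitude [fourier y], slots l < j hold correct
   answers, and the others are still blank. *)
Definition amp (j : nat) (s : S) : R :=
  fourier (dec s.2).1 * c ^+ j.+1 * (s.1.2 == false)%:R *
  \prod_(l : 'I_r) (if (l < j)%N then correct (dec s.2).2 l
                    else (dec s.2).2 l == (pos0 k, false))%:R.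

Lemma run0 : run Q x 0 = fun s => (c * ((s.1.2 == false) && (s.2 == w0))%:R)%:C.
Proof.
rewrite /= deltaE apply_cplx; apply: boolp.funext => s.
rewrite kapply_hgate /init; congr (_ * _)%:C.
under eq_bigr do rewrite !xpair_eqE -andbA.
by rewrite sum_mul_delta_and walsh_pos0r mul1r.
Qed.

Lemma run2 : run Q x 2 = fun s => (amp 0 s)%:C.
Proof.
have -> : run Q x 2 = apply_op (cplx (@gate R k r 2)) (apply_op (@oracle R n _ x)
   (apply_op (cplx (@gate R k r 1)) (apply_op (@oracle R n _ x) (run Q x 0)))) by [].
rewrite run0 apply_oracle apply_cplx apply_oracle apply_cplx.
apply: boolp.funext => s; congr (_)%:C.
have -> : (fun s0 => kapply (@gate R k r 1) (fun s1 => c *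
      (((flip x s1).1.2 == false) && ((flip x s1).2 == w0))%:R) (flip x s0)) =
    fun s => (-1) ^+ x s.1.1 * c * ((s.1.2 == false) && (s.2 == w0))%:R.
  apply: boolp.funext => -[[i b] w] /=; rewrite kapply_zgate /= addbK.
  by case: b; case: (x i); rewrite /= ?mul0r ?mulr0 ?andFb ?andbF // ?mulrA.
rewrite /= !kapply_mul.
have -> : kapply (@hgate R k _) (fun s => (-1) ^+ x s.1.1 * c *
                                         ((s.1.2 == false) && (s.2 == w0))%:R) =
    fun s => fourier s.1.1 * ((s.1.2 == false) && (s.2 == w0))%:R.
  apply: boolp.funext => t; rewrite kapply_hgate /= /fourier.
  by rewrite !mulr_sumr mulr_suml; apply: eq_bigr => i _; ring.
rewrite kapply_perm; last exact: swap_indexK.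
rewrite kapply_hgate /= /swap_index /=.
under eq_bigr do rewrite (inj_eq (can_inj (@encK k r))) xpair_eqE andbCA mulrA.
rewrite sum_mul_delta_and walsh_pos0r mul1r /amp prod_nat_bool.
have -> : ((dec s.2).2 == blank k r) = [forall l, (dec s.2).2 l == (pos0 k, false)].
  apply/eqP/forallP => [-> l|blank_all]; first by rewrite ffunE.
  by apply/ffunP => l; rewrite ffunE; apply/eqP.
by rewrite -mulnb natrM expr1; ring.
Qed.

Lemma amp_record j (l : 'I_r) : val l = j -> forall i b w,
  amp j (flip x (record l (i, b, w))) =
  fourier (dec w).1 * c ^+ j.+1 * (correct (dec w).2 l)%:R *
  (((i == pos0 k) && (b == false))%:R *
   \prod_(l' | l' != l) (if (l' < j)%N then correct (dec w).2 l'
                         else (dec w).2 l' == (pos0 k, false))%:R).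
Proof.
move=> <- i b w.
rewrite /amp /record /flip /= encK /= (bigD1 l) //= ffunE eqxx ltnn xpair_eqE.
rewrite /correct; congr (_ * _ * _ * (_ * _)).
  by case: ((dec w).2 l).2; case: (x ((dec w).2 l).1).
by apply: eq_bigr => l' l'l; rewrite ffunE (negbTE l'l).
Qed.

Lemma run_amp j : (j <= r)%N -> run Q x j.+2 = fun s => (amp j s)%:C.
Proof.
elim: j => [_|j IH lt_jr]; first exact: run2.
have -> : run Q x j.+3 =
  apply_op (cplx (@gate R k r j.+3)) (apply_op (@oracle R n _ x) (run Q x j.+2)) by [].
rewrite IH ?(ltnW lt_jr) // apply_oracle apply_cplx.
apply: boolp.funext => s; congr (_)%:C.
set l := Ordinal lt_jr.
have -> : @gate R k r j.+3 = kmul (@hgate R k _) (kperm R (record l)).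
  by rewrite /= insubT.
rewrite kapply_mul (kapply_perm _ (recordK l)) kapply_hgate /=.
set y := (dec s.2).1; set sl := (dec s.2).2.
pose P : R := \prod_(l' | l' != l) (if (l' < j)%N then correct sl l'
                                    else sl l' == (pos0 k, false))%:R.
transitivity (c * \sum_i
    walsh R s.1.1 i * (fourier y * c ^+ j.+1 * (correct sl l)%:R * P) *
    ((i == pos0 k) && (s.1.2 == false))%:R).
  congr (_ * _); apply: eq_bigr => i _.
  by rewrite (amp_record (erefl : val l = j)) -/y -/sl -/P; ring.
rewrite sum_mul_delta_and walsh_pos0r mul1r /amp -/y -/sl (bigD1 l) //= ltnSn.
have -> : \prod_(l' | l' != l) (if (l' < j.+1)%N then correct sl l'
                               else sl l' == (pos0 k, false))%:R = P.
  apply: eq_bigr => l' l'l; rewrite ltnS leq_eqVlt.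
  by move: l'l; rewrite -val_eqE /= => /negbTE ->.
by rewrite !exprS; ring.
Qed.

End Run.

Section Agreement.
Variables (R : realType) (k : nat) (x : {ffun 'I_(2 ^ k) -> bool}).
Local Notation n := (2 ^ k)%N.

Definition agree (y : 'I_n) : R := \sum_i (x i == hadamard (bitvec y) i)%:R.

Definition consistent (y : 'I_n) (p : 'I_n * bool) : R :=
  ((p.2 == hadamard (bitvec y) p.1) && (p.2 == x p.1))%:R.

Lemma sum_consistent y : \sum_p consistent y p = agree y.
Proof.
transitivity (\sum_i \sum_b consistent y (i, b)).
  by rewrite pair_bigA; apply: eq_big => [|[]].
apply: eq_bigr => i _; rewrite big_bool /consistent /=.
by case: (x i); case: (hadamard (bitvec y) i); rewrite /= ?add0r ?addr0.
Qed.

End Agreement.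

Section Acceptance.
Variables (R : realType) (k r : nat) (A : {set {ffun 'I_k -> bool}}).
Variable x : {ffun 'I_(2 ^ k) -> bool}.
Local Notation n := (2 ^ k)%N.
Local Notation c := (hscale R k).
Local Notation fourier := (fourier R x).

Lemma accepting_amp_sqr i b (w : workspace k r) :
  ((i, b, enc w) \in accepting r A)%:R * amp R x r (i, b, enc w) ^+ 2 =
  (b == false)%:R * ((bitvec w.1 \in A)%:R * fourier w.1 ^+ 2 * c ^+ (2 * r.+1) *
                     \prod_l consistent R x w.1 (w.2 l)).
Proof.
case: w => y sl; rewrite inE /amp /= encK /=.
under eq_bigr do rewrite ltn_ord.
rewrite prod_nat_bool /consistent.
under eq_bigr do rewrite -mulnb natrM.
rewrite big_split /= !prod_nat_bool -!mulnb !natrM !exprMn.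
by rewrite mulnC exprM !sqr_natb /correct; ring.
Qed.

Lemma acc_prob_tester : acc_prob (tester R r A) x =
  \sum_(y : 'I_n) (bitvec y \in A)%:R * fourier y ^+ 2 * (c * c * agree R x y) ^+ r.
Proof.
pose G y : R := (bitvec y \in A)%:R * fourier y ^+ 2 * c ^+ (2 * r.+1).
transitivity (\sum_(i : 'I_n) \sum_(b : bool) \sum_(w : workspace k r)
    (b == false)%:R * (G w.1 * \prod_l consistent R x w.1 (w.2 l))).
  rewrite /acc_prob run_amp // big_mkcond sum_basis_workspace.
  do 3!apply: eq_bigr => ? _.
  by rewrite sqnorm_real -mulrb -[LHS]mulr_natl accepting_amp_sqr.
transitivity (\sum_(i : 'I_n) \sum_(w : workspace k r)
    G w.1 * \prod_l consistent R x w.1 (w.2 l)).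
  apply: eq_bigr => i _; rewrite exchange_big; apply: eq_bigr => w _.
  exact: (sum_delta_mul (fun _ => _)).
rewrite sumr_const card_ord.
rewrite -(pair_bigA _ (fun y (sl : samples k r) =>
  G y * \prod_l consistent R x y (sl l))).
under eq_bigr => y _ do rewrite -mulr_sumr sum_ffun_prod sum_consistent card_ord.
rewrite -mulr_natr mulr_suml; apply: eq_bigr => y _.
have c_pow : c ^+ (2 * r.+1) = (c * c) ^+ r * (c * c) by rewrite exprM exprSr expr2.
transitivity ((bitvec y \in A)%:R * fourier y ^+ 2 * (c * c * agree R x y) ^+ r *
              (c * c * n%:R)); first by rewrite /G c_pow !exprMn; ring.
by rewrite hscale_sqr mulr1.
Qed.

Lemma sum_fourier_sqr : \sum_(y : 'I_n) fourier y ^+ 2 = 1.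
Proof.
pose f i : R := (-1) ^+ x i.
transitivity (\sum_y \sum_i \sum_j
    ((c * c) ^+ 2 * (f i * f j)) * (walsh R y i * walsh R y j)).
  apply: eq_bigr => y _; rewrite /fourier exprMn [X in _ * X]expr2 big_distrlr mulr_sumr.
  by apply: eq_bigr => i _; rewrite mulr_sumr; apply: eq_bigr => j _; rewrite /= /f; ring.
rewrite exchange_big; under eq_bigr do rewrite exchange_big.
transitivity (\sum_(i : 'I_n) (c * c) ^+ 2 * n%:R).
  apply: eq_bigr => i _.
  under eq_bigr do rewrite -mulr_sumr sum_walsh_mul eq_sym mulrCA mulrA.
  by rewrite -mulr_suml sum_delta_mul /f -signr_addb addbb expr0; ring.
rewrite sumr_const card_ord -mulr_natr.
transitivity ((c * c * n%:R) ^+ 2); first by ring.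
by rewrite hscale_sqr expr1n.
Qed.

End Acceptance.

Section Completeness.
Variables (R : realType) (k : nat).
Local Notation n := (2 ^ k)%N.

Lemma fourier_hadamard (y0 y : 'I_n) :
  fourier R (hadamard (bitvec y0)) y = (y == y0)%:R.
Proof.
rewrite /fourier; under eq_bigr do rewrite -walsh_hadamard (walshC _ y) (walshC _ y0).
by rewrite sum_walsh_mul mulrCA hscale_sqr mulr1.
Qed.

Lemma agree_hadamard (y : 'I_n) : agree R (hadamard (bitvec y)) y = n%:R.
Proof. by rewrite /agree; under eq_bigr do rewrite eqxx; rewrite sumr_const card_ord. Qed.

Lemma acc_prob_tester_PA r (A : {set {ffun 'I_k -> bool}}) x :
  x \in PA A -> acc_prob (tester R r A) x = 1.
Proof.
rewrite inE => /existsP[Y0 /andP[Y0A /eqP ->]].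
have [unbit _ unbitK] := bitvec_bij k; rewrite -[Y0]unbitK in Y0A *.
rewrite acc_prob_tester (bigD1 (unbit Y0)) //= big1 ?addr0 => [|y y_neq]; last first.
  by rewrite fourier_hadamard (negbTE y_neq) expr0n /= mulr0 mul0r.
by rewrite fourier_hadamard eqxx Y0A agree_hadamard hscale_sqr !expr1n !mul1r.
Qed.

End Completeness.

Section Soundness.
Variables (R : realType) (k : nat) (x : {ffun 'I_(2 ^ k) -> bool}).
Local Notation n := (2 ^ k)%N.
Local Notation c := (hscale R k).

Lemma hamming_add_agree (y : 'I_n) :
  (hamming x (hadamard (bitvec y)))%:R + agree R x y = n%:R.
Proof.
rewrite /hamming -sum1_card natr_sum big_mkcond /agree -big_split /=.
rewrite -[n in RHS]card_ord -sumr_const; apply: eq_bigr => i _.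
by rewrite inE; case: (x i == _); rewrite /= ?add0r ?addr0.
Qed.

Lemma scaled_agree_far (eps : R) A (y : 'I_n) :
  far eps (PA A) x -> bitvec y \in A -> c * c * agree R x y <= 1 - eps.
Proof.
move=> farx yA; have hy : hadamard (bitvec y) \in PA A.
  by rewrite inE; apply/existsP; exists (bitvec y); rewrite yA eqxx.
have := farx _ hy; have := hamming_add_agree y; have := hscale_sqr R k.
have := mulr_ge0 (hscale_ge0 R k) (hscale_ge0 R k).
move: (c * c) (hamming _ _)%:R (agree R x y) => C h a C0 Cn ha far_h.
have Cepsn : C * (eps * n%:R) = eps by rewrite mulrCA Cn mulr1.
nra.
Qed.

Lemma scaled_agree_ge0 (y : 'I_n) : 0 <= c * c * agree R x y.
Proof.
by rewrite !mulr_ge0 ?hscale_ge0 //; apply: sumr_ge0 => i _; exact: ler0n.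
Qed.

Lemma acc_prob_tester_far r A (eps : R) :
  far eps (PA A) x -> (1 - eps) ^+ r <= 1 / 3 -> acc_prob (tester R r A) x <= 1 / 3.
Proof.
move=> farx small; rewrite acc_prob_tester.
have <- : \sum_(y : 'I_n) fourier R x y ^+ 2 * (1 / 3 : R) = 1 / 3.
  by rewrite -mulr_suml sum_fourier_sqr mul1r.
apply: ler_sum => y _; rewrite -mulrA; case yA: (bitvec y \in A); last first.
  by rewrite mul0r mulr_ge0 ?sqr_ge0 // divr_ge0 ?ler0n.
rewrite (_ : true%:R = 1 :> R) // mul1r ler_wpM2l ?sqr_ge0 // (le_trans _ small) //.
have agree_le := scaled_agree_far farx yA.
rewrite lerXn2r ?nnegrE ?scaled_agree_ge0 ?agree_le //.
exact: le_trans (scaled_agree_ge0 y) agree_le.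
Qed.

End Soundness.

Lemma bernoulli_le1 (R : realFieldType) (e : R) n : 0 <= e -> e <= 1 ->
  (1 - e) ^+ n * (1 + n%:R * e) <= 1.
Proof.
move=> e_ge0 e_le1; elim: n => [|n IH]; first by rewrite expr0 mul0r addr0 mul1r.
have pow_ge0 : 0 <= (1 - e) ^+ n by rewrite exprn_ge0 // subr_ge0.
have step : (1 - e) * (1 + n.+1%:R * e) <= 1 + n%:R * e.
  by rewrite -natr1; have := ler0n R n; nra.
by rewrite exprS -mulrA mulrCA (le_trans _ IH) // ler_wpM2l.
Qed.

Lemma expr1B_le_third (R : realFieldType) (eps : R) r :
  0 <= eps -> eps <= 1 -> 2 < r%:R * eps -> (1 - eps) ^+ r <= 1 / 3.
Proof.
move=> eps_ge0 eps_le1 r_eps; have := bernoulli_le1 r eps_ge0 eps_le1.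
have : 0 <= (1 - eps) ^+ r by rewrite exprn_ge0 // subr_ge0.
move: ((1 - eps) ^+ r) => p p_ge0 p_bern; nra.
Qed.

Lemma far_ge1 (R : realType) n (eps : R) (P : {set {ffun 'I_n -> bool}}) x :
  1 <= eps -> far eps P x -> P = set0.
Proof.
move=> eps_ge1 farx; apply/setP => y; rewrite inE; apply/negP => yP.
have := farx y yP.
have : (hamming x y <= n)%N by rewrite -[n in (_ <= n)%N]card_ord max_card.
rewrite -(ler_nat R); have := ler0n R n.
move: (n%:R : R) (hamming x y)%:R => N h N_ge0 h_le; nra.
Qed.

Lemma PA_eq0 k (A : {set {ffun 'I_k -> bool}}) : (PA A == set0) = (A == set0).
Proof.
apply/eqP/eqP => [PA0|->]; last first.
  by apply/setP => x; rewrite !inE; apply/existsP => -[y]; rewrite inE.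
apply/setP => y; rewrite inE; apply/negP => yA.
have : hadamard y \in PA A by rewrite inE; apply/existsP; exists y; rewrite yA eqxx.
by rewrite PA0 inE.
Qed.

Section QueryFree.
Variables (R : realType) (k : nat) (A : {set {ffun 'I_k -> bool}}).
Local Notation n := (2 ^ k)%N.
Local Open Scope complex_scope.

Definition nonempty_test : qalgo R n :=
  QAlgo 1 0 (pos0 k, false, ord0) (fun _ => cplx (kperm R id))
        (if A == set0 then set0 else setT).

Lemma nonempty_test_wf : qalgo_wf nonempty_test.
Proof. by move=> j _; apply/unitary_cplx/orthogonal_perm. Qed.

Lemma acc_prob_nonempty_test x : acc_prob nonempty_test x = (A != set0)%:R.
Proof.
rewrite /acc_prob /= deltaE apply_cplx kapply_perm //.
under eq_bigr do rewrite sqnorm_real.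
case: (A == set0); first by rewrite big_set0.
transitivity (\sum_(s : basis n 1) (s == (pos0 k, false, ord0))%:R * (1 : R)).
  by apply: eq_big => [s|s _]; rewrite ?inE // mulr1 sqr_natb.
by rewrite sum_delta_mul.
Qed.

End QueryFree.

Lemma tester_queries (R : realType) (eps : R) : 0 < eps -> eps < 1 ->
  ((Num.truncn (2 / eps)).+3)%:R <= 5 / eps.
Proof.
move=> eps_gt0 eps_lt1.
have trunc_le : (Num.truncn (2 / eps))%:R <= 2 / eps by rewrite truncn_le divr_ge0 // ltW.
have inv_ge1 : 1 <= eps^-1 by rewrite invf_ge1 // ltW.
by rewrite -addn3 natrD; lra.
Qed.

Lemma expr1B_truncn_le_third (R : realType) (eps : R) : 0 < eps -> eps < 1 ->
  (1 - eps) ^+ (Num.truncn (2 / eps)).+1 <= 1 / 3.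
Proof.
move=> eps_gt0 eps_lt1; apply: expr1B_le_third; rewrite ?ltW //.
by rewrite -ltr_pdivrMr // truncnS_gt.
Qed.

Theorem lemma3p2 (R : realType) :
  exists C : R, 0 < C /\
    forall (k : nat) (A : {set {ffun 'I_k -> bool}}) (eps : R), 0 < eps ->
      exists Q : qalgo R (2 ^ k),
        one_sided_tester (PA A) eps Q /\ (qa_T Q)%:R <= C / eps.
Proof.
exists 5; split => // k A eps eps_gt0.
have [eps_lt1|eps_ge1] := ltrP eps 1.
  exists (tester R (Num.truncn (2 / eps)).+1 A); split; last exact: tester_queries.
  split; first exact: tester_wf.
  split=> x; first exact: acc_prob_tester_PA.
  by move/acc_prob_tester_far; apply; exact: expr1B_truncn_le_third.
exists (nonempty_test R A); split; last by rewrite divr_ge0 // ltW.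
split; first exact: nonempty_test_wf.
split=> x; rewrite acc_prob_nonempty_test.
  by case: eqP => // ->; rewrite inE => /existsP[y]; rewrite inE.
by move/(far_ge1 eps_ge1)/eqP; rewrite PA_eq0 => /eqP->; rewrite eqxx divr_ge0.
Qed.
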